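(* Let $\Gamma\in[0,1]$, $\Lambda>0$, $d_0\in(0,1]$, and let the thresholds be exponentially distributed with parameter $\Lambda$, i.e. $F(x)=1-e^{-\Lambda x}$, so that the hazard function $h_F(x)=f(x)/(1-F(x))$ equals $\Lambda$. Then (1) the HILT fluid-limit equation $\dot b=d$, $\dot d=h_F(\Gamma b)\Gamma d(1-b-d)-d$ becomes $$\dot b=d,\qquad \dot d=\Lambda\Gamma d(1-b-d)-d,$$ and (2) for its solution with $b(0)=0$, $d(0)=d_0$, the limit $b_\infty=\lim_{t\to\infty}b(t)$ exists and satisfies $$b_\infty=1-(1-d_0)e^{-\Lambda\Gamma b_\infty}.$$ *)

From Stdlib Require Import Reals.
Open Scope R_scope.

Definition expF (Lam x : R) : R := 1 - exp (- Lam * x).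
Definition expf (Lam x : R) : R := Lam * exp (- Lam * x).

Definition hazard (F f : R -> R) (x : R) : R := f x / (1 - F x).

Definition HILT_solution (h : R -> R) (Gam : R) (b d : R -> R) : Prop :=
  (forall t, 0 < t -> derivable_pt_lim b t (d t)) /\
  (forall t, 0 < t ->
     derivable_pt_lim d t (h (Gam * b t) * Gam * d t * (1 - b t - d t) - d t)) /\
  (forall eps, 0 < eps -> exists delta, 0 < delta /\
     forall t, 0 <= t < delta -> Rabs (b t - b 0) < eps /\ Rabs (d t - d 0) < eps).

Definition lim_infty (g : R -> R) (l : R) : Prop :=
  forall eps, 0 < eps -> exists T, forall t, T <= t -> Rabs (g t - l) < eps.

From Stdlib Require Import Reals.
From Stdlib Require Import Lra Classical.
From Coquelicot Require Import Coquelicot.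
Open Scope R_scope.

(* Proof of the limit statement.
   - The quantity  K = (1 - b - d) e^(a b)  is a first integral: K' = 0, so
     K is constant on (0, oo), and by right-continuity at 0 it equals 1 - d0.
     Hence  1 - b - d = (1 - d0) e^(-a b) >= 0  for t > 0.
   - Then (d e^t)' = a d (1 - b - d) e^t >= 0 wherever d > 0; a continuous
     induction shows d > 0 on [0, oo).  So b is increasing and, as
     b < 1 - d <= 1, it converges to some b_oo.
   - Writing d = phi(b) with phi(x) = 1 - x - (1 - d0) e^(-a x) continuous,
     b' = d tends to phi(b_oo); a convergent function whose derivative has a
     limit must have derivative limit 0, so phi(b_oo) = 0, the fixed point.
   The file first proves the general real-analysis facts (continuous
   induction, zero derivative, monotone convergence, limits at infinity),
   then the facts about the system in a section, and finally the theorem. *)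

Lemma hazard_exponential (Lam x : R) :
  hazard (expF Lam) (expf Lam) x = Lam.
Proof.
  unfold hazard, expF, expf.
  assert (exp (- Lam * x) > 0) by apply exp_pos.
  field; lra.
Qed.

Lemma derivable_pt_lim_eq (f : R -> R) (x l l' : R) :
  derivable_pt_lim f x l -> l = l' -> derivable_pt_lim f x l'.
Proof. now intros H <-. Qed.

Lemma continuity_pt_eps (f : R -> R) (x : R) : continuity_pt f x ->
  forall eps, 0 < eps -> exists alp, 0 < alp /\
    forall y, Rabs (y - x) < alp -> Rabs (f y - f x) < eps.
Proof.
  intros Hf eps Heps.
  destruct (Hf eps Heps) as [alp [Halp Hclose]].
  exists alp; split; [exact Halp|].
  intros y Hy. destruct (Req_dec y x) as [->|Hne].
  - rewrite Rminus_diag, Rabs_R0; exact Heps.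
  - apply (Hclose y). repeat split; auto.
Qed.

Lemma continuous_induction (P : R -> Prop) :
  (exists del, 0 < del /\ forall t, 0 <= t < del -> P t) ->
  (forall s, 0 < s -> (forall t, 0 <= t < s -> P t) ->
     exists e, 0 < e /\ forall t, 0 <= t < s + e -> P t) ->
  forall t, 0 <= t -> P t.
Proof.
  intros [del [Hdel Hstart]] Hstep t Ht.
  destruct (classic (P t)) as [|HnP]; [assumption|exfalso].
  set (E := fun x => 0 <= x /\ forall u, 0 <= u < x -> P u).
  assert (HE : bound E).
  { exists t. intros x [Hx HPx]. destruct (Rle_dec x t); [assumption|].
    exfalso; apply HnP, HPx; lra. }
  destruct (completeness E HE) as [m [Hub Hlub]].
  { exists 0. split; [lra|intros; lra]. }
  assert (Hm : del <= m) by (apply Hub; split; [lra|exact Hstart]).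
  assert (Hbelow : forall u, 0 <= u < m -> P u).
  { intros u Hu.
    destruct (classic (exists x, E x /\ u < x)) as [[x [[_ Hx] Hux]]|Hno].
    - apply Hx; lra.
    - assert (m <= u); [|lra].
      apply Hlub. intros x Ex. destruct (Rle_dec x u); [assumption|].
      exfalso; apply Hno; exists x; split; [assumption|lra]. }
  destruct (Hstep m ltac:(lra) Hbelow) as [e [He Hext]].
  assert (m + e <= m) by (apply Hub; split; [lra|exact Hext]).
  lra.
Qed.

Lemma constant_of_zero_derivative (f : R -> R) :
  (forall t, 0 < t -> derivable_pt_lim f t 0) ->
  forall s t, 0 < s -> 0 < t -> f s = f t.
Proof.
  assert (Hlt : forall s t, 0 < s -> s < t ->
            (forall u, 0 < u -> derivable_pt_lim f u 0) -> f s = f t).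
  { intros s t Hs Hst Hf.
    destruct (MVT_cor2 f (fun _ => 0) s t Hst) as [c [Hc _]].
    - intros c Hc; apply Hf; lra.
    - lra. }
  intros Hf s t Hs Ht.
  destruct (Rtotal_order s t) as [Hst|[->|Hts]]; auto.
  symmetry; auto.
Qed.

Lemma right_continuous_filterlim (f : R -> R) :
  (forall eps, 0 < eps -> exists delta, 0 < delta /\
     forall t, 0 <= t < delta -> Rabs (f t - f 0) < eps) ->
  filterlim f (at_right 0) (locally (f 0)).
Proof.
  intros Hf. apply filterlim_locally. intros eps.
  destruct (Hf eps (cond_pos eps)) as [del [Hdel Hclose]].
  exists (mkposreal del Hdel). intros y Hy Hy0.
  unfold ball in *; simpl in *.
  unfold AbsRing_ball, abs, minus, plus, opp in *; simpl in *.
  apply Hclose. apply Rabs_def2 in Hy. lra.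
Qed.

Lemma constant_eq_right_limit (f : R -> R) (l : R) :
  filterlim f (at_right 0) (locally l) ->
  (forall s t, 0 < s -> 0 < t -> f s = f t) ->
  forall t, 0 < t -> f t = l.
Proof.
  intros Hlim Hconst t Ht.
  assert (Hk : filterlim (fun _ : R => f t) (at_right 0) (locally l)).
  { eapply filterlim_ext_loc; [|exact Hlim].
    exists (mkposreal 1 Rlt_0_1). intros y _ Hy. apply Hconst; assumption. }
  exact (filterlim_locally_unique _ _ _ (filterlim_const (f t)) Hk).
Qed.

Lemma nondecreasing_bounded_limit (f : R -> R) (M : R) :
  (forall s t, 0 < s -> s <= t -> f s <= f t) ->
  (forall t, 0 < t -> f t <= M) ->
  exists L, lim_infty f L.
Proof.
  intros Hmono Hbound.
  set (E := fun x => exists t, 0 < t /\ x = f t).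
  destruct (completeness E) as [L [Hub Hlub]].
  - exists M. intros x [t [Ht ->]]. auto.
  - exists (f 1). exists 1; split; [lra|reflexivity].
  - exists L. intros eps Heps.
    assert (Hnear : exists t0, 0 < t0 /\ L - eps < f t0).
    { apply NNPP. intro Hno. assert (L <= L - eps); [|lra].
      apply Hlub. intros x [t [Ht ->]].
      destruct (Rle_dec (f t) (L - eps)); [assumption|].
      exfalso; apply Hno; exists t; split; [assumption|lra]. }
    destruct Hnear as [t0 [Ht0 Hft0]].
    exists t0. intros t Ht.
    assert (f t0 <= f t) by (apply Hmono; lra).
    assert (f t <= L) by (apply Hub; exists t; split; [lra|reflexivity]).
    apply Rabs_def1; lra.
Qed.

Lemma lim_infty_ext_pos (f g : R -> R) (l : R) :
  (forall t, 0 < t -> f t = g t) -> lim_infty f l -> lim_infty g l.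
Proof.
  intros Hfg Hf eps Heps. destruct (Hf eps Heps) as [T HT].
  exists (Rmax T 1). intros t Ht.
  pose proof (Rmax_l T 1); pose proof (Rmax_r T 1).
  rewrite <- Hfg by lra. apply HT; lra.
Qed.

Lemma lim_infty_continuous_comp (f g : R -> R) (L : R) :
  lim_infty f L -> continuity_pt g L -> lim_infty (fun t => g (f t)) (g L).
Proof.
  intros Hf Hg eps Heps.
  destruct (continuity_pt_eps g L Hg eps Heps) as [alp [Halp Hclose]].
  destruct (Hf alp Halp) as [T HT]. exists T. auto.
Qed.

Lemma lim_infty_opp (f : R -> R) (l : R) :
  lim_infty f l -> lim_infty (fun t => - f t) (- l).
Proof.
  intros Hf eps Heps. destruct (Hf eps Heps) as [T HT]. exists T.
  intros t Ht. replace (- f t - - l) with (- (f t - l)) by ring.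
  rewrite Rabs_Ropp. auto.
Qed.

(* If f converges at oo and f' has a limit c at oo, then c <= 0:
   otherwise f would eventually grow at least linearly. *)
Lemma derivative_limit_nonpos (f f' : R -> R) (L c : R) :
  (forall t, 0 < t -> derivable_pt_lim f t (f' t)) ->
  lim_infty f L -> lim_infty f' c -> c <= 0.
Proof.
  intros Hder Hf Hf'.
  destruct (Rle_dec c 0) as [|Hc]; [assumption|exfalso].
  destruct (Hf' (c / 2) ltac:(lra)) as [T1 HT1].
  destruct (Hf 1 ltac:(lra)) as [T2 HT2].
  pose proof (Rmax_l 1 (Rmax T1 T2)); pose proof (Rmax_r 1 (Rmax T1 T2)).
  pose proof (Rmax_l T1 T2); pose proof (Rmax_r T1 T2).
  set (T := Rmax 1 (Rmax T1 T2)) in *.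
  assert (Hgap : 0 < 4 / c) by (apply Rdiv_lt_0_compat; lra).
  destruct (MVT_cor2 f f' T (T + 4 / c) ltac:(lra)) as [x [Hmvt Hx]].
  { intros x Hx. apply Hder; lra. }
  assert (Hfx : c / 2 < f' x)
    by (specialize (HT1 x ltac:(lra)); apply Rabs_def2 in HT1; lra).
  assert (Hgrow : 2 < f (T + 4 / c) - f T).
  { rewrite Hmvt. replace (T + 4 / c - T) with (4 / c) by ring.
    replace 2 with (c / 2 * (4 / c)) by (field; lra).
    apply Rmult_lt_compat_r; assumption. }
  assert (HfT := HT2 T ltac:(lra)).
  assert (HfT' := HT2 (T + 4 / c) ltac:(lra)).
  apply Rabs_def2 in HfT. apply Rabs_def2 in HfT'. lra.
Qed.

Lemma derivative_limit_zero (f f' : R -> R) (L c : R) :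
  (forall t, 0 < t -> derivable_pt_lim f t (f' t)) ->
  lim_infty f L -> lim_infty f' c -> c = 0.
Proof.
  intros Hder Hf Hf'.
  assert (c <= 0) by exact (derivative_limit_nonpos f f' L c Hder Hf Hf').
  assert (- c <= 0); [|lra].
  apply (derivative_limit_nonpos (fun t => - f t) (fun t => - f' t) (- L));
    [|now apply lim_infty_opp|now apply lim_infty_opp].
  intros t Ht. exact (derivable_pt_lim_opp f t (f' t) (Hder t Ht)).
Qed.

Section ReducedHILT.

Variables (a d0 : R) (b d : R -> R).
Hypothesis a_nonneg : 0 <= a.
Hypothesis d0_range : 0 < d0 <= 1.
Hypothesis b_deriv : forall t, 0 < t -> derivable_pt_lim b t (d t).
Hypothesis d_deriv : forall t, 0 < t ->
  derivable_pt_lim d t (a * d t * (1 - b t - d t) - d t).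
Hypothesis right_cont : forall eps, 0 < eps -> exists delta, 0 < delta /\
  forall t, 0 <= t < delta -> Rabs (b t - b 0) < eps /\ Rabs (d t - d 0) < eps.
Hypothesis b_init : b 0 = 0.
Hypothesis d_init : d 0 = d0.

Definition first_integral (t : R) : R := (1 - b t - d t) * exp (a * b t).

Lemma first_integral_derivative (t : R) :
  0 < t -> derivable_pt_lim first_integral t 0.
Proof.
  intros Ht.
  change (derivable_pt_lim (mult_fct (minus_fct (minus_fct (fct_cte 1) b) d)
                              (comp exp (mult_real_fct a b))) t 0).
  eapply derivable_pt_lim_eq.
  - apply derivable_pt_lim_mult.
    + apply derivable_pt_lim_minus; [apply derivable_pt_lim_minus|].
      * apply derivable_pt_lim_const.
      * exact (b_deriv t Ht).
      * exact (d_deriv t Ht).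
    + apply derivable_pt_lim_comp.
      * apply derivable_pt_lim_scal. exact (b_deriv t Ht).
      * apply derivable_pt_lim_exp.
  - unfold mult_real_fct, minus_fct, fct_cte, comp. ring.
Qed.

Lemma first_integral_right_limit :
  filterlim first_integral (at_right 0) (locally (first_integral 0)).
Proof.
  assert (Fb : filterlim b (at_right 0) (locally (b 0))).
  { apply right_continuous_filterlim. intros eps Heps.
    destruct (right_cont eps Heps) as [del [Hdel Hclose]].
    exists del; split; [exact Hdel|]. intros t Ht; apply Hclose, Ht. }
  assert (Fd : filterlim d (at_right 0) (locally (d 0))).
  { apply right_continuous_filterlim. intros eps Heps.
    destruct (right_cont eps Heps) as [del [Hdel Hclose]].
    exists del; split; [exact Hdel|]. intros t Ht; apply Hclose, Ht. }
  assert (Fsum := filterlim_comp_2 _ _ plus Fb Fd (filterlim_plus (b 0) (d 0))).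
  assert (Cmass : continuity_pt (fun x => 1 - x) (plus (b 0) (d 0))) by reg.
  assert (Cexp : continuity_pt (fun x => exp (a * x)) (b 0)) by reg.
  apply continuity_pt_filterlim in Cmass, Cexp.
  assert (Fmass := filterlim_comp _ _ _ _ _ _ _ _ Fsum Cmass).
  assert (Fexp := filterlim_comp _ _ _ _ _ _ _ _ Fb Cexp).
  assert (Fprod := filterlim_comp_2 _ _ mult Fmass Fexp (filterlim_mult _ _)).
  unfold first_integral.
  replace ((1 - b 0 - d 0) * exp (a * b 0))
    with (mult (1 - plus (b 0) (d 0)) (exp (a * b 0)))
    by (unfold mult, plus; simpl; ring).
  eapply filterlim_ext; [|exact Fprod].
  intros t; unfold mult, plus; simpl; ring.
Qed.

Lemma remaining_mass (t : R) :
  0 < t -> 1 - b t - d t = (1 - d0) * exp (- (a * b t)).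
Proof.
  intros Ht.
  assert (HK : first_integral t = first_integral 0).
  { apply (constant_eq_right_limit _ _ first_integral_right_limit); [|exact Ht].
    apply constant_of_zero_derivative, first_integral_derivative. }
  unfold first_integral in HK.
  rewrite b_init, d_init, Rmult_0_r, exp_0 in HK.
  rewrite exp_Ropp.
  replace (1 - d0) with ((1 - b t - d t) * exp (a * b t)) by (rewrite HK; ring).
  field. apply Rgt_not_eq, exp_pos.
Qed.

Lemma remaining_mass_nonneg (t : R) : 0 < t -> 0 <= 1 - b t - d t.
Proof.
  intros Ht. rewrite (remaining_mass t Ht).
  apply Rmult_le_pos; [lra|left; apply exp_pos].
Qed.

(* Where d > 0 we have (d e^t)' = a d (1 - b - d) e^t >= 0, so d cannot
   reach 0: by continuous induction d stays positive. *)
Lemma d_positive (t : R) : 0 <= t -> 0 < d t.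
Proof.
  revert t; apply continuous_induction.
  - destruct (right_cont d0 ltac:(lra)) as [del [Hdel Hclose]].
    exists del; split; [exact Hdel|].
    intros u Hu. destruct (Hclose u Hu) as [_ Hd]. apply Rabs_def2 in Hd. lra.
  - intros s Hs Hbelow.
    assert (Hweighted : d (s / 2) * exp (s / 2) <= d s * exp s).
    { destruct (MVT_cor2 (mult_fct d exp)
          (fun u => (a * d u * (1 - b u - d u) - d u) * exp u + d u * exp u)
          (s / 2) s ltac:(lra)) as [c [Hmvt Hc]].
      { intros c Hc. apply derivable_pt_lim_mult;
          [apply d_deriv; lra|apply derivable_pt_lim_exp]. }
      unfold mult_fct in Hmvt.
      assert (0 <= (a * d c * (1 - b c - d c) - d c) * exp c + d c * exp c); [|nra].
      replace ((a * d c * (1 - b c - d c) - d c) * exp c + d c * exp c)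
        with (a * d c * (1 - b c - d c) * exp c) by ring.
      assert (0 < d c) by (apply Hbelow; lra).
      assert (0 <= 1 - b c - d c) by (apply remaining_mass_nonneg; lra).
      apply Rmult_le_pos; [|left; apply exp_pos].
      apply Rmult_le_pos; nra. }
    assert (Hds : 0 < d s).
    { assert (0 < d (s / 2)) by (apply Hbelow; lra).
      assert (0 < exp s) by apply exp_pos.
      assert (0 < exp (s / 2)) by apply exp_pos.
      destruct (Rlt_le_dec 0 (d s)); [assumption|nra]. }
    assert (Hcont : continuity_pt d s).
    { apply derivable_continuous_pt. exists (a * d s * (1 - b s - d s) - d s).
      apply d_deriv, Hs. }
    destruct (continuity_pt_eps d s Hcont (d s) Hds) as [alp [Halp Hclose]].
    exists alp; split; [exact Halp|]. intros u Hu.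
    destruct (Rlt_le_dec u s); [apply Hbelow; lra|].
    assert (Hdu : Rabs (d u - d s) < d s) by (apply Hclose, Rabs_def1; lra).
    apply Rabs_def2 in Hdu. lra.
Qed.

(* b is increasing (b' = d > 0) and bounded by 1, hence converges. *)
Lemma b_converges : exists L, lim_infty b L.
Proof.
  apply (nondecreasing_bounded_limit b 1).
  - intros s t Hs Hst. destruct (Req_dec s t) as [->|Hne]; [lra|].
    destruct (MVT_cor2 b d s t ltac:(lra)) as [c [Hmvt Hc]].
    { intros c Hc; apply b_deriv; lra. }
    assert (0 < d c) by (apply d_positive; lra). nra.
  - intros t Ht. assert (0 < d t) by (apply d_positive; lra).
    assert (0 <= 1 - b t - d t) by (apply remaining_mass_nonneg, Ht). lra.
Qed.

(* The limit of b is a fixed point: d = phi(b) tends to phi(b_oo), which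
   must vanish since b' = d and b converges. *)
Lemma limit_fixed_point :
  exists L, lim_infty b L /\ L = 1 - (1 - d0) * exp (- (a * L)).
Proof.
  destruct b_converges as [L HL]. exists L; split; [exact HL|].
  set (phi := fun x => 1 - x - (1 - d0) * exp (- (a * x))).
  assert (Hd_lim : lim_infty d (phi L)).
  { apply (lim_infty_ext_pos (fun t => phi (b t))).
    - intros t Ht. unfold phi. rewrite <- (remaining_mass t Ht). ring.
    - apply lim_infty_continuous_comp; [exact HL|unfold phi; reg]. }
  assert (phi L = 0) by exact (derivative_limit_zero b d L _ b_deriv HL Hd_lim).
  unfold phi in *. lra.
Qed.

End ReducedHILT.

Theorem theorem3 (Gam Lam d0 : R) (b d : R -> R)
  (hGam : 0 <= Gam <= 1) (hLam : 0 < Lam) (hd0 : 0 < d0 <= 1)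
  (hsol : HILT_solution (hazard (expF Lam) (expf Lam)) Gam b d)
  (hb0 : b 0 = 0) (hdinit : d 0 = d0) :
  (* (1) the hazard is constant Lam, so the system reduces *)
  (forall x, hazard (expF Lam) (expf Lam) x = Lam) /\
  (forall t, 0 < t ->
     derivable_pt_lim d t (Lam * Gam * d t * (1 - b t - d t) - d t)) /\
  (* (2) b_oo = lim b exists and solves the fixed-point equation *)
  (exists binf, lim_infty b binf /\
     binf = 1 - (1 - d0) * exp (- Lam * Gam * binf)).
Proof.
  destruct hsol as [Hb [Hd Hrc]].
  assert (Hreduced : forall t, 0 < t ->
    derivable_pt_lim d t (Lam * Gam * d t * (1 - b t - d t) - d t)).
  { intros t Ht. rewrite <- (hazard_exponential Lam (Gam * b t)). auto. }
  split; [exact (hazard_exponential Lam)|split; [exact Hreduced|]].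
  destruct (limit_fixed_point (Lam * Gam) d0 b d ltac:(nra) hd0 Hb Hreduced
              Hrc hb0 hdinit) as [L [HL Hfix]].
  exists L; split; [exact HL|].
  replace (- Lam * Gam * L) with (- (Lam * Gam * L)) by ring. exact Hfix.
Qed.
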